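(* Let $\mathcal{F}=\{f_1,\dots,f_{M_0},f_{M_0+1},\dots,f_{M_0+n}\}$ be homogeneous polynomials on $\mathbb{R}^n$ with $f_{M_0+j}(z)=z_j$ for $j=1,\dots,n$ (not necessarily satisfying any further property). Suppose there exists a set $V\subset\mathbb{R}^n$ with $\{0\}\subsetneq V$ such that for every $y\in\mathbb{R}^{M_0+n}\setminus\{0\}$ the restriction to $V$ of $\sum_{k=1}^{M_0+n}y_kf_k$ is either identically zero or changes sign (takes both strictly positive and strictly negative values) on $V$. Then there exists a non-trivial (non-Dirac) $\mu\in\mathbb{M}^{pc}_{\mathcal{F}}(0)$.
   Context: $\mathbb{M}^{pc}_{\mathcal{F}}(0)$ is the set of probability measures $\mu$ on $\mathbb{R}^n$ with $\int z\,d\mu=0$ and $\int f\,d\mu=f(\int z\,d\mu)$ for all $f\in\mathcal{F}$. *)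

From HB Require Import structures.
From mathcomp Require Import all_boot all_order all_algebra.
From mathcomp Require Import all_classical all_reals all_analysis.
From mathcomp Require mpoly.

Set Implicit Arguments.
Unset Strict Implicit.
Unset Printing Implicit Defensive.
Import Order.TTheory GRing.Theory Num.Theory.

Local Open Scope classical_set_scope.
Local Open Scope ring_scope.

(* R^n is modelled as [n.-tuple R], with its canonical (product = Borel)
   sigma-algebra from mathcomp-analysis. *)

Definition peval (R : realType) (n : nat) (p : mpoly.mpoly n R) (z : n.-tuple R) : R :=
  mpoly.meval (fun i => tnth z i) p.

Definition homogeneous (R : realType) (n : nat) (p : mpoly.mpoly n R) : Prop :=
  exists d : nat, p \in @mpoly.ishomog1 n R d (mpoly.mpoly_mdeg__canonical__mpoly_Measure n).

Definition coord_poly (R : realType) (n : nat) (j : 'I_n) : mpoly.mpoly n R :=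
  mpoly.mpolyX R (mpoly.mnm1 j).

Definition zero_vec (R : realType) (n : nat) : n.-tuple R := [tuple (0 : R) | _ < n].

(* M^{pc}_F(x): probability measures mu on R^n such that the coordinates are
   mu-integrable with  int z dmu = x, and every f in F is mu-integrable with
   int f dmu = f(int z dmu) = f(x). *)
Definition Mpc (R : realType) (n : nat) (F : set (mpoly.mpoly n R))
    (x : n.-tuple R) (mu : probability (n.-tuple R) R) : Prop :=
  (forall j : 'I_n,
      mu.-integrable setT (fun z : n.-tuple R => (tnth z j)%:E) /\
      (\int[mu]_z (tnth z j)%:E = (tnth x j)%:E)%E) /\
  (forall f, F f ->
      mu.-integrable setT (fun z => (peval f z)%:E) /\
      (\int[mu]_z (peval f z)%:E = (peval f x)%:E)%E).

Definition nontrivial (R : realType) (n : nat) (mu : probability (n.-tuple R) R) : Prop :=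
  exists A : set (n.-tuple R), measurable A /\ mu A <> \d_(zero_vec R n) A.

(* Put Phi(z) = (f_k(z))_k in R^m, m = M0 + n.  The sign hypothesis says that a
   linear form y which is nonnegative on Phi(V) vanishes on Phi(V).  In finite
   dimension a convex cone other than the whole space lies in a closed half-space;
   for the cone spanned by Phi(V) plus the annihilator W of Phi(V), a normal y of
   such a half-space would lie in W and be orthogonal to W, hence y = 0.  So that
   cone is everything: for v in V, -Phi(v) = sum_i c_i Phi(z_i) + w with c_i >= 0,
   z_i in V and w in W; as w is also in the span of Phi(V), w = 0.
   The normalised mixture of Dirac masses at v and at the z_i then integrates every
   f_k to 0 = f_k(0) (a homogeneous f_k vanishes at 0, a nonzero constant being
   excluded by the sign hypothesis), so it lies in M^pc_F(0), and it charges v <> 0. *)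

From HB Require Import structures.
From mathcomp Require Import all_boot all_order all_algebra.
From mathcomp Require Import all_classical all_reals all_analysis.
From mathcomp Require Import lra measurable_realfun.
From mathcomp Require mpoly.

Set Implicit Arguments.
Unset Strict Implicit.
Unset Printing Implicit Defensive.
Import Order.TTheory GRing.Theory Num.Theory.

Local Open Scope classical_set_scope.
Local Open Scope ring_scope.

Definition convex_cone (R : numDomainType) (V : lmodType R) (K : set V) :=
  [/\ K 0, forall a b, K a -> K b -> K (a + b) &
      forall c a, 0 <= c -> K a -> K (c *: a)].

Lemma convex_cone_preimage (R : numDomainType) (U V : lmodType R)
    (f : {linear U -> V}) (K : set V) :
  convex_cone K -> convex_cone (f @^-1` K).
Proof.
case=> K0 KD KZ; split=> [|a b Ka Kb|c a c0 Ka]; rewrite /preimage /=.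
- by rewrite linear0.
- by rewrite linearD; exact: KD.
- by rewrite linearZ; exact: KZ.
Qed.

Section convex_cone_two_sided.
Variables (R : realType) (V : lmodType R) (K : set V) (t : {scalar V}) (b1 b2 : V).
Hypotheses (coneK : convex_cone K) (Kb1 : K b1) (Kb2 : K b2).
Hypotheses (tb1 : 0 < t b1) (tb2 : t b2 < 0).

Lemma convex_cone_kernel_full : (forall a, t a = 0 -> K a) -> K = setT.
Proof.
case: coneK => _ KD KZ Kker; apply/seteqP; split=> // a _.
have [b [Kb tb0 c0]] : exists b, [/\ K b, t b != 0 & 0 <= t a / t b].
  have [ta0|ta0] := leP 0 (t a).
    by exists b1; rewrite gt_eqF // divr_ge0 // ltW.
  by exists b2; rewrite lt_eqF // ler_ndivlMr // mul0r ltW.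
rewrite -(subrK ((t a / t b) *: b) a); apply: KD; last exact: KZ.
by apply: Kker; rewrite linearB linearZ /= divfK // subrr.
Qed.

(* For t a > 0 > t b, the vector (- t b) a + (t a) b lies in K and in the kernel
   of t; hence sup_a (- phi a / t a) <= inf_b (phi b / - t b), and s can be
   taken to be the supremum. *)
Lemma convex_cone_shift (phi : {scalar V}) :
  (forall a, K a -> t a = 0 -> 0 <= phi a) ->
  exists s, forall a, K a -> 0 <= phi a + s * t a.
Proof.
case: coneK => _ KD KZ phi_ker.
have bound a b : K a -> K b -> 0 < t a -> t b < 0 -> - phi a / t a <= phi b / - t b.
  move=> Ka Kb ta tb.
  have : 0 <= phi ((- t b) *: a + t a *: b).
    apply: phi_ker; first by apply: KD; apply: KZ => //; rewrite ?oppr_ge0 ltW.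
    by rewrite linearD !linearZ /= mulNr mulrC addNr.
  rewrite linearD !linearZ /= => h.
  rewrite ler_pdivlMr ?oppr_gt0 // mulrAC ler_pdivrMr //; nra.
pose L := [set - phi a / t a | a in [set a | K a /\ 0 < t a]].
have L_ub : ubound L (phi b2 / - t b2) by move=> _ [a [Ka ta] <-]; exact: bound.
have L_ne : L !=set0 by exists (- phi b1 / t b1), b1.
exists (sup L) => a Ka; case: (ltgtP (t a) 0) => ta.
- have : sup L <= phi a / - t a by apply: ge_sup => // _ [b [Kb tb] <-]; exact: bound.
  by rewrite ler_pdivlMr ?oppr_gt0 //; nra.
- have : - phi a / t a <= sup L.
    by apply: sup_upper_bound; [split; [|exists (phi b2 / - t b2)] | exists a].
  by rewrite ler_pdivrMr //; nra.
- by rewrite ta mulr0 addr0; exact: phi_ker.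
Qed.

End convex_cone_two_sided.

Section coordinates.
Variable R : realType.
Local Notation vec m := ('I_m -> R^o).

Definition dotp m (y a : vec m) : R := \sum_(i < m) y i * a i.

Lemma dotp_is_scalar m (y : vec m) : scalar (dotp y).
Proof.
move=> c a b; rewrite /dotp mulr_sumr -big_split /=; apply: eq_bigr => i _.
by rewrite mulrDr mulrCA.
Qed.

HB.instance Definition _ m (y : vec m) :=
  GRing.isLinear.Build R (vec m) R *%R (dotp y) (dotp_is_scalar y).

Lemma dotpDr m (y a b : vec m) : dotp y (a + b) = dotp y a + dotp y b.
Proof. exact: linearD. Qed.

Lemma dotpNr m (y a : vec m) : dotp y (- a) = - dotp y a.
Proof. exact: linearN. Qed.

Lemma dotpZr m (y a : vec m) c : dotp y (c *: a) = c * dotp y a.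
Proof. exact: linearZ. Qed.

Lemma dotp0r m (y : vec m) : dotp y 0 = 0.
Proof. exact: linear0. Qed.

Lemma dotp_sumr m (y : vec m) (I : Type) (r : seq I) (F : I -> vec m) :
  dotp y (\sum_(i <- r) F i) = \sum_(i <- r) dotp y (F i).
Proof. exact: linear_sum. Qed.

Lemma dotpC m (y a : vec m) : dotp y a = dotp a y.
Proof. by apply: eq_bigr => i _; rewrite mulrC. Qed.

Lemma dotpp_eq0 m (a : vec m) : dotp a a = 0 -> a = 0.
Proof.
move=> aa0; apply/funext => i; apply/eqP; rewrite -sqrf_eq0 expr2; apply/eqP.
by apply: (psumr_eq0P _ aa0) => // j _; rewrite -expr2 sqr_ge0.
Qed.

Lemma dotp_delta m (k : 'I_m) (c : R) (a : vec m) :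
  dotp (fun i => if i == k then c else 0) a = c * a k.
Proof.
rewrite /dotp (bigD1 k) //= eqxx big1 ?addr0 // => i /negbTE ->.
by rewrite mul0r.
Qed.

Definition vcons m (s : R) (u : vec m) : vec m.+1 :=
  fun i => if unlift ord0 i is Some j then u j else s.
Definition vhead m (a : vec m.+1) : R := a ord0.
Definition vtail m (a : vec m.+1) : vec m := fun j => a (lift ord0 j).

Lemma vhead_is_scalar m : scalar (@vhead m).
Proof. by []. Qed.

HB.instance Definition _ m :=
  GRing.isLinear.Build R (vec m.+1) R *%R (@vhead m) (@vhead_is_scalar m).

Lemma vcons0_is_linear m : linear (@vcons m 0).
Proof.
move=> c u v; apply/funext => i; rewrite /vcons !fctE.
by case: unlift => //; rewrite scaler0 addr0.
Qed.

HB.instance Definition _ m :=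
  GRing.isLinear.Build R (vec m) (vec m.+1) *:%R (@vcons m 0) (@vcons0_is_linear m).

Lemma vtail_cons m s (u : vec m) : vtail (vcons s u) = u.
Proof. by apply/funext => j; rewrite /vtail /vcons liftK. Qed.

Lemma vcons_head_tail m (a : vec m.+1) : vcons (vhead a) (vtail a) = a.
Proof. by apply/funext => i; rewrite /vcons; case: unliftP => [j|] ->. Qed.

Lemma dotp_cons m s (y : vec m) (a : vec m.+1) :
  dotp (vcons s y) a = s * vhead a + dotp y (vtail a).
Proof.
rewrite /dotp big_ord_recl /vcons unlift_none.
by under eq_bigr do rewrite liftK.
Qed.

(* Induction on m: unless vhead has a constant sign on K, a half-space containing
   the slice of K by the hyperplane vhead = 0 is extended by convex_cone_shift. *)
Lemma convex_cone_halfspace m (K : set (vec m)) :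
  convex_cone K -> K != setT ->
  exists2 y : vec m, y <> 0 & forall a, K a -> 0 <= dotp y a.
Proof.
elim: m K => [|m IH] K coneK KT.
  have [K0 _ _] := coneK; move/eqP: KT; apply: contra_notP => _.
  by apply/seteqP; split=> // a _; rewrite (_ : a = 0) //; apply/funext => -[].
have dotp_e s (a : vec m.+1) : dotp (vcons s 0) a = s * vhead a.
  by rewrite dotp_cons dotpC dotp0r addr0.
have [K_ge0|] := pselect (forall a, K a -> 0 <= vhead a).
  exists (vcons 1 0) => [/(congr1 (@vhead m))|a Ka].
    by rewrite /vhead /vcons unlift_none; exact/eqP/oner_neq0.
  by rewrite dotp_e mul1r K_ge0.
have [K_le0|] := pselect (forall a, K a -> vhead a <= 0).
  exists (vcons (-1) 0) => [/(congr1 (@vhead m))|a Ka].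
    by rewrite /vhead /vcons unlift_none; apply/eqP; rewrite oppr_eq0 oner_neq0.
  by rewrite dotp_e mulN1r oppr_ge0 K_le0.
move=> /existsNP[b1 /not_implyP[Kb1 /negP]]; rewrite -ltNge => tb1.
move=> /existsNP[b2 /not_implyP[Kb2 /negP]]; rewrite -ltNge => tb2.
have [||y' y'_neq0 y'K] := IH (vcons 0 @^-1` K); first exact: convex_cone_preimage.
  apply: contra_neq KT => K0T.
  apply: (convex_cone_kernel_full coneK Kb1 Kb2 tb1 tb2) => a a0.
  rewrite -(vcons_head_tail a) a0; have : [set: vec m] (vtail a) by [].
  by rewrite -K0T.
have [|s hs] := convex_cone_shift coneK Kb1 Kb2 tb1 tb2 (phi := dotp (vcons 0 y')).
  move=> a Ka a0 /=; rewrite dotp_cons mul0r add0r; apply: y'K.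
  by rewrite /preimage /= -a0 vcons_head_tail.
exists (vcons s y') => [/(congr1 (@vtail m))|a Ka]; first by rewrite vtail_cons.
by have := hs a Ka; rewrite /= !dotp_cons mul0r add0r addrC mulrC.
Qed.

End coordinates.

Section conic_combination.
Variables (R : realType) (T : eqType) (m : nat) (Phi : T -> 'I_m -> R^o) (V : set T).

Definition vanishes_or_changes_sign (g : T -> R) :=
  (forall z, V z -> g z = 0) \/
  ((exists z, V z /\ 0 < g z) /\ (exists z, V z /\ g z < 0)).

Definition nonneg_vanishes := forall y,
  (forall z, V z -> 0 <= dotp y (Phi z)) -> forall z, V z -> dotp y (Phi z) = 0.

Lemma sign_change_nonneg_vanishes :
  (forall y : 'I_m -> R, (exists k, y k <> 0) ->
     vanishes_or_changes_sign (fun z => dotp y (Phi z))) ->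
  nonneg_vanishes.
Proof.
move=> sign y y_ge0; have [[k yk]|y0] := pselect (exists k, y k <> 0).
  case: (sign y) => [|//|[_ [z [Vz yz]]]]; first by exists k.
  by have := y_ge0 z Vz; rewrite leNgt yz.
move=> z _; rewrite /dotp big1 // => i _.
by rewrite (_ : y i = 0) ?mul0r //; apply: contra_notP y0 => ?; exists i.
Qed.

Definition nonneg_weights_in (l : seq (R * T)) :=
  forall p, p \in l -> 0 <= p.1 /\ V p.2.

Definition conic_comb (l : seq (R * T)) : 'I_m -> R^o := \sum_(p <- l) p.1 *: Phi p.2.

Lemma conic_combE l k : conic_comb l k = \sum_(p <- l) p.1 * Phi p.2 k.
Proof. by rewrite /conic_comb fct_sumE. Qed.

Definition annihilator := [set w | forall z, V z -> dotp w (Phi z) = 0].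

Definition cone_plus_annihilator := [set a | exists l w,
  [/\ nonneg_weights_in l, annihilator w & a = conic_comb l + w]].

Lemma annihilator_sub_cone w : annihilator w -> cone_plus_annihilator w.
Proof. by exists [::], w; rewrite /conic_comb big_nil add0r. Qed.

Lemma convex_cone_plus_annihilator : convex_cone cone_plus_annihilator.
Proof.
split=> [|_ _ [l1 [w1 [l1V w1W ->]]] [l2 [w2 [l2V w2W ->]]]|c _ c0 [l [w [lV wW ->]]]].
- by apply: annihilator_sub_cone => z _; rewrite dotpC dotp0r.
- exists (l1 ++ l2), (w1 + w2); split.
  + by move=> p; rewrite mem_cat => /orP[/l1V|/l2V].
  + by move=> z Vz; rewrite dotpC dotpDr !(dotpC (Phi z)) w1W ?w2W ?addr0.
  + by rewrite /conic_comb big_cat /= addrACA.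
- exists [seq (c * p.1, p.2) | p <- l], (c *: w); split.
  + by move=> _ /mapP[p /lV[p0 Vp] ->]; split=> //; exact: mulr_ge0.
  + by move=> z Vz; rewrite dotpC dotpZr dotpC wW ?mulr0.
  + rewrite scalerDr /conic_comb big_map scaler_sumr; congr (_ + _).
    by apply: eq_bigr => p _; rewrite scalerA.
Qed.

Hypothesis nonneg_vanish : nonneg_vanishes.

Lemma const_coord_eq0 k c z0 : V z0 -> (forall z, V z -> Phi z k = c) -> c = 0.
Proof.
move=> Vz0 Phik; apply/eqP; rewrite -sqrf_eq0 expr2; apply/eqP.
have := nonneg_vanish (y := fun i => if i == k then c else 0) _ Vz0.
rewrite dotp_delta Phik // => -> // z Vz.
by rewrite dotp_delta Phik // -expr2 sqr_ge0.
Qed.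

Lemma cone_plus_annihilator_full : cone_plus_annihilator = setT.
Proof.
apply: contrapT => /eqP KT.
have [y y_neq0 yK] := convex_cone_halfspace convex_cone_plus_annihilator KT.
have yW : annihilator y.
  apply: nonneg_vanish => z Vz; apply: yK; exists [:: (1, z)], 0; split.
  + by move=> p; rewrite inE => /eqP ->.
  + by move=> *; rewrite dotpC dotp0r.
  + by rewrite /conic_comb big_seq1 scale1r addr0.
have y_perpW w : annihilator w -> dotp y w = 0.
  move=> wW; have wNW : annihilator (- w).
    by move=> z Vz; rewrite dotpC dotpNr dotpC wW ?oppr0.
  by apply/eqP; rewrite eq_le -oppr_ge0 -dotpNr !yK //; exact: annihilator_sub_cone.
exact/y_neq0/dotpp_eq0/y_perpW.
Qed.

Lemma exists_conic_comb_opp v : V v ->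
  exists2 l, nonneg_weights_in l & Phi v + conic_comb l = 0.
Proof.
move=> Vv; have [l [w [lV wW vlw]]] : cone_plus_annihilator (- Phi v).
  by rewrite cone_plus_annihilator_full.
have w0 : w = 0.
  apply: dotpp_eq0; rewrite {2}(_ : w = - (Phi v + conic_comb l)); last first.
    by rewrite opprD vlw addrAC subrr add0r.
  rewrite dotpNr dotpDr wW // add0r /conic_comb dotp_sumr big_seq big1 ?oppr0 //.
  by move=> p /lV[_ Vp]; rewrite dotpZr wW ?mulr0.
by exists l; rewrite // -[Phi v]opprK vlw w0 addr0 addNr.
Qed.

End conic_combination.

Section dirac_mixture.
Context d (T : measurableType d) (R : realType).
Implicit Types l : seq (R * T).

(* Weights enter through their absolute values, so that no sign condition is
   needed to build the measure. *)
Fixpoint dirac_comb l : {measure set T -> \bar R} :=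
  if l is p :: l' then measure_add (mscale (`|p.1|)%:nng \d_(p.2)) (dirac_comb l')
  else mzero.

Lemma dirac_combE l A : dirac_comb l A = (\sum_(p <- l) `|p.1|%:E * \d_(p.2) A)%E.
Proof.
elim: l => [|p l IH] /=; first by rewrite big_nil.
by rewrite /msum !big_ord_recl big_ord0 /= adde0 big_cons IH.
Qed.

Lemma ge0_integral_dirac_comb l (g : T -> \bar R) :
  (forall x, 0 <= g x)%E -> measurable_fun [set: T] g ->
  (\int[dirac_comb l]_x g x = \sum_(p <- l) `|p.1|%:E * g p.2)%E.
Proof.
move=> g0 mg; elim: l => [|p l IH] /=; first by rewrite big_nil integral_measure_zero.
rewrite ge0_integral_measure_add // ge0_integral_mscale // IH big_cons.
by rewrite integral_dirac // diracT mul1e.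
Qed.

Lemma integrable_dirac_comb l (f : T -> R) : measurable_fun [set: T] f ->
  (dirac_comb l).-integrable [set: T] (fun x => (f x)%:E).
Proof.
move=> mf; apply/integrableP; split; first exact/measurable_EFinP.
rewrite ge0_integral_dirac_comb //; last first.
  by apply/measurable_EFinP; exact: measurableT_comp (@normr_measurable R setT) mf.
by under eq_bigr do rewrite -EFinM; rewrite sumEFin ltry.
Qed.

Lemma integral_dirac_comb l (f : T -> R) : measurable_fun [set: T] f ->
  (\int[dirac_comb l]_x (f x)%:E = (\sum_(p <- l) `|p.1| * f p.2)%:E)%E.
Proof.
move=> mf; have mfE : measurable_fun [set: T] (EFin \o f) by exact/measurable_EFinP.
rewrite integralE !ge0_integral_dirac_comb //; last 2 first.
- exact: measurable_funeneg.
- exact: measurable_funepos.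
under eq_bigr do rewrite funeposE -EFin_max -EFinM.
under [X in (_ - X)%E]eq_bigr do rewrite funenegE -EFinN -EFin_max -EFinM.
rewrite !sumEFin -EFinB -sumrB; congr EFin; apply: eq_bigr => p _.
by rewrite -mulrBr -[in X in _ - X]oppr0 -oppr_min opprK addr_max_min addr0.
Qed.

(* [point] is only a fallback, used when the total mass is 0 or infinite. *)
Definition dirac_mixture l : probability T R := mnormalize (dirac_comb l) point.

Lemma dirac_mixtureE l A : \sum_(p <- l) `|p.1| = 1 -> dirac_mixture l A = dirac_comb l A.
Proof.
move=> l1; rewrite /= /mnormalize dirac_combE.
under eq_bigr do rewrite diracT mule1.
by rewrite sumEFin l1 onee_eq0 /= invr1 mule1.
Qed.

Lemma exists_dirac_mixture l : (forall p, p \in l -> 0 <= p.1) ->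
  0 < \sum_(p <- l) p.1 ->
  exists mu : probability T R,
    (forall f, measurable_fun [set: T] f ->
      mu.-integrable [set: T] (fun x => (f x)%:E) /\
      (\int[mu]_x (f x)%:E = ((\sum_(p <- l) p.1 * f p.2) / \sum_(p <- l) p.1)%:E)%E) /\
    (forall p A, p \in l -> 0 < p.1 -> measurable A -> A p.2 -> (0 < mu A)%E).
Proof.
set S := \sum_(p <- l) p.1 => l_ge0 S_gt0.
pose l' := [seq (p.1 / S, p.2) | p <- l].
have l'_ge0 p : p \in l -> 0 <= p.1 / S by move/l_ge0 => p0; rewrite divr_ge0 // ltW.
have l'1 : \sum_(p <- l') `|p.1| = 1.
  rewrite big_map -(divff (lt0r_neq0 S_gt0)) mulr_suml !big_seq.
  by apply: eq_bigr => p /l'_ge0 /ger0_norm.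
have muE : dirac_mixture l' =1 dirac_comb l' by move=> A; exact: dirac_mixtureE.
exists (dirac_mixture l'); split=> [f mf|p A pl p_gt0 mA Ap]; first split.
- have /integrableP[mfE fin] := integrable_dirac_comb l' mf.
  apply/integrableP; split; rewrite // (eq_measure_integral (dirac_comb l')) // => A _ _.
  exact: muE.
- rewrite (eq_measure_integral (dirac_comb l')) => [|A _ _]; last exact: muE.
  rewrite integral_dirac_comb // big_map mulr_suml !big_seq; congr EFin.
  by apply: eq_bigr => p /l'_ge0 /ger0_norm ->; rewrite mulrAC.
rewrite muE dirac_combE (big_rem (p.1 / S, p.2)) ?(map_f (fun p => (p.1 / S, p.2))) //=.
rewrite diracE mem_set // mule1 (lt_le_trans _ (leeDl _ _)) ?sume_ge0 // => [|q _].
  by rewrite (_ : 0%E = 0%:E) // lte_fin normr_gt0 mulf_neq0 ?invr_eq0 ?gt_eqF.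
by rewrite mule_ge0.
Qed.

End dirac_mixture.

Local Coercion mpoly.fun_of_multinom : mpoly.multinom >-> Funclass.

Section polynomial_evaluation.
Variables (R : realType) (n : nat).
Implicit Types p : mpoly.mpoly n R.

Lemma pevalE p z : peval p z =
  \sum_(m <- mpoly.msupp p) mpoly.mcoeff m p * \prod_(i < n) tnth z i ^+ m i.
Proof. exact: mpoly.mevalE. Qed.

Lemma peval_measurable p : measurable_fun [set: n.-tuple R] (peval p).
Proof.
rewrite (_ : peval p = fun z => \sum_(m <- mpoly.msupp p)
  mpoly.mcoeff m p * \prod_(i < n) tnth z i ^+ m i); last exact/funext/pevalE.
apply: measurable_sum => m; apply: measurable_funM; first exact: measurable_cst.
by apply: measurable_prod => i _; apply: measurable_funX; exact: measurable_tnth.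
Qed.

Lemma tnth_zero_vec i : tnth (zero_vec R n) i = 0.
Proof. exact: tnth_mktuple. Qed.

Lemma exists_tnth_neq0 v : v <> zero_vec R n -> exists j, tnth v j <> 0.
Proof.
move=> v_neq0; apply: contrapT => v0; apply/v_neq0/eq_from_tnth => j.
by rewrite tnth_zero_vec; apply: contrapT => vj; apply: v0; exists j.
Qed.

Lemma measurable_tnth_neq0 j : measurable [set z : n.-tuple R | tnth z j <> 0].
Proof.
have := measurable_tnth j measurableT (measurableC (measurable_set1 (0 : R))).
by rewrite setTI.
Qed.

Lemma peval_coord j (z : n.-tuple R) : peval (coord_poly R j) z = tnth z j.
Proof. exact: mpoly.mevalXU. Qed.

Lemma homogeneous_peval_zero p : homogeneous p ->
  peval p (zero_vec R n) = 0 \/ forall z, peval p z = peval p (zero_vec R n).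
Proof.
move=> [dg p_homog].
have /all_filterP supp_dg : all (fun m => mpoly.mdeg m == dg) (mpoly.msupp p) := p_homog.
case: dg {p_homog} supp_dg => [|dg] supp_dg; [right => z | left].
all: rewrite !pevalE -supp_dg !big_filter.
  apply: eq_bigr => m; rewrite mpoly.mdeg_eq0 => /eqP ->.
  by congr (_ * _); apply: eq_bigr => i _; rewrite mpoly.mnm0E !expr0.
rewrite big1 // => m /eqP m_deg.
under eq_bigr do rewrite tnth_zero_vec.
by rewrite prodrXr -mpoly.mdegE m_deg expr0n mulr0.
Qed.

End polynomial_evaluation.

Theorem lemma2 (R : realType) (n M0 : nat)
    (f : 'I_(M0 + n) -> mpoly.mpoly n R)
    (hhom : forall k, homogeneous (f k))
    (hcoord : forall j : 'I_n, f (rshift M0 j) = coord_poly R j)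
    (V : set (n.-tuple R))
    (hV0 : V (zero_vec R n))
    (hVne : exists v, V v /\ v <> zero_vec R n)
    (hsign : forall y : 'I_(M0 + n) -> R, (exists k, y k <> 0) ->
       let g := fun z => \sum_(k < M0 + n) y k * peval (f k) z in
       (forall z, V z -> g z = 0) \/
       ((exists z, V z /\ 0 < g z) /\ (exists z, V z /\ g z < 0))) :
  exists mu : probability (n.-tuple R) R,
    Mpc (range f) (zero_vec R n) mu /\ nontrivial mu.
Proof.
pose Phi z : 'I_(M0 + n) -> R^o := fun k => peval (f k) z.
have vanish : nonneg_vanishes Phi V by exact: sign_change_nonneg_vanishes.
have f0 k : peval (f k) (zero_vec R n) = 0.
  have [//|fk_const] := homogeneous_peval_zero (hhom k).
  by apply: (const_coord_eq0 vanish (k := k) hV0) => z _; exact: fk_const.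
have [v [Vv v_neq0]] := hVne.
have [l lV Phi_vl] := exists_conic_comb_opp vanish Vv.
have [||mu [mu_int mu_atom]] := exists_dirac_mixture (l := (1, v) :: l).
- by move=> p; rewrite inE => /predU1P[-> //|/lV[]].
- by rewrite big_cons ltr_pwDl // big_seq sumr_ge0 // => p /lV[].
have mu_f k : mu.-integrable setT (fun z => (peval (f k) z)%:E) /\
    (\int[mu]_z (peval (f k) z)%:E = (peval (f k) (zero_vec R n))%:E)%E.
  have [? ->] := mu_int _ (peval_measurable (f k)); split => //.
  rewrite f0 big_cons mul1r -(conic_combE Phi) -[_ + _]/((Phi v + conic_comb Phi l) k).
  by rewrite Phi_vl mul0r.
exists mu; split; first split.
- move=> j; rewrite -(peval_coord j (zero_vec R n)) -hcoord.
  have -> : (fun z => (tnth z j)%:E) = (fun z => (peval (f (rshift M0 j)) z)%:E).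
    by apply/funext => z; rewrite hcoord peval_coord.
  exact: mu_f.
- by move=> _ [k _ <-]; exact: mu_f.
have [j vj] := exists_tnth_neq0 v_neq0.
exists [set z | tnth z j <> 0]; split; first exact: measurable_tnth_neq0.
rewrite diracE memNset /= ?tnth_zero_vec //; apply/eqP; rewrite gt_eqF //.
by apply: (mu_atom (1, v)); rewrite ?mem_head //; exact: measurable_tnth_neq0.
Qed.
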